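(* Fix $n\ge1$. The map $\Psi\colon\mathrm{MAD}(c^\times)\to\overline{\mathcal{M}}_{n+1}$ is a bijection.
   Context: Place points $1,\ldots,n+1$ left to right on a horizontal line. An arc is a curve from a point $i$ to a point $j>i$ moving monotonically rightward and passing above or below each of $i+1,\ldots,j-1$; arcs are identified if they have the same endpoints and pass above the same points. A noncrossing arc diagram is a set of arcs that can be drawn so that no two share a left endpoint, no two share a right endpoint, and no two cross in their interiors. An arc from $i$ to $j$ is $c^\times$-sortable if, for each $k$ with $i<k<j$, it passes above $k$ when $k$ is odd and below $k$ when $k$ is even. $\mathrm{MAD}(c^\times)$ is the set of noncrossing arc diagrams consisting of $c^\times$-sortable arcs that are maximal under inclusion among such diagrams. For $\delta\in\mathrm{MAD}(c^\times)$, $\Psi(\delta)=\mathtt{M}_1\cdots\mathtt{M}_{n+1}$ where $\mathtt{M}_i=\mathtt{U}$ if $i\le n$ and $i+1$ is not the right endpoint of an arc of $\delta$; $\mathtt{M}_i=\mathtt{D}$ if $i\ge2$ and $i-1$ is not the left endpoint of an arc of $\delta$; and $\mathtt{M}_i=\mathtt{H}$ otherwise. A Motzkin path of length $m$ is a word in $\mathtt{U},\mathtt{D},\mathtt{H}$ of length $m$ with equally many $\mathtt{U}$'s and $\mathtt{D}$'s and every prefix having at least as many $\mathtt{U}$'s as $\mathtt{D}$'s. A peak is a consecutive $\mathtt{U}\mathtt{D}$; its height is $\#_\mathtt{U}(P)-\#_\mathtt{D}(P)$ for $P$ the prefix ending with that $\mathtt{U}$. $\overline{\mathcal{M}}_m$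 is the set of Motzkin paths of length $m$ with no peak of height $1$. (It is known that $\Psi(\delta)\in\overline{\mathcal{M}}_{n+1}$ for every $\delta\in\mathrm{MAD}(c^\times)$.) *)

From mathcomp Require Import all_boot.
Set Implicit Arguments. Unset Strict Implicit. Unset Printing Implicit Defensive.

(* Points 1, ..., n+1 are the values 1..n+1 of 'I_(n.+2) (value 0 is unused).
   An arc is (left endpoint, right endpoint, set of points it passes above).
   Arcs with the same endpoints and same above-set are identified: this is
   exactly equality of triples, given the validity condition below which
   forces the above-set to lie strictly between the endpoints. *)
Definition arcT (n : nat) : finType := ('I_n.+2 * 'I_n.+2 * {set 'I_n.+2})%type.

Section Arcs.
Variable n : nat.
Implicit Types (a b : arcT n) (k : 'I_n.+2).

Definition aleft a : nat := a.1.1.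
Definition aright a : nat := a.1.2.
Definition above a k : bool := k \in a.2.

Definition interior a k : bool := (aleft a < k) && (k < aright a).
Definition isend a k : bool := (k == aleft a :> nat) || (k == aright a :> nat).

Definition valid_arc a : bool :=
  [&& 1 <= aleft a, aleft a < aright a & [forall k, above a k ==> interior a k]].

Definition sortable a : bool :=
  valid_arc a && [forall k, interior a k ==> (above a k == odd k)].

(* At point k (in both closed spans), arc a is forced to be strictly above b. *)
Definition over_at a b k : bool :=
  [|| [&& interior a k, interior b k, above a k & ~~ above b k],
      [&& interior a k, isend b k & above a k]
    | [&& isend a k, interior b k & ~~ above b k]].

Definition crossing a b : bool :=
  [exists k, over_at a b k] && [exists k, over_at b a k].

Definition noncrossing_diagram (d : {set arcT n}) : bool :=
  [forall a in d, valid_arc a] &&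
  [forall a in d, forall b in d, (a != b) ==>
     [&& aleft a != aleft b, aright a != aright b & ~~ crossing a b]].

Definition sortable_nc (d : {set arcT n}) : bool :=
  noncrossing_diagram d && [forall a in d, sortable a].

Definition is_MAD (d : {set arcT n}) : Prop :=
  sortable_nc d /\ forall d' : {set arcT n}, sortable_nc d' -> d \subset d' -> d' = d.

End Arcs.

Inductive step := U | D | H.

Definition isU (s : step) : bool := if s is U then true else false.
Definition isD (s : step) : bool := if s is D then true else false.

Definition Psi_letter (n : nat) (d : {set arcT n}) (i : nat) : step :=
  if (i <= n) && ~~ [exists a in d, aright a == i.+1] then U
  else if (2 <= i) && ~~ [exists a in d, aleft a == i.-1] then D
  else H.

Definition Psi (n : nat) (d : {set arcT n}) : seq step :=
  [seq Psi_letter d i | i <- iota 1 n.+1].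

Definition motzkin (m : nat) (w : seq step) : Prop :=
  [/\ size w = m, count isU w = count isD w &
      forall p, count isD (take p w) <= count isU (take p w)].

(* height of the peak whose U is at (0-based) position p *)
Definition peak_height (w : seq step) (p : nat) : nat :=
  count isU (take p.+1 w) - count isD (take p.+1 w).

Definition no_peak_height1 (w : seq step) : Prop :=
  forall p, p.+1 < size w -> isU (nth H w p) -> isD (nth H w p.+1) ->
    peak_height w p <> 1.

Definition Mbar (m : nat) (w : seq step) : Prop := motzkin m w /\ no_peak_height1 w.

From mathcomp Require Import all_boot zify.
Set Implicit Arguments. Unset Strict Implicit. Unset Printing Implicit Defensive.

(* A c^x-sortable arc is determined by its endpoints, and two such arcs cross
   exactly when they overlap with an even sum of the two inner endpoints, or are
   nested with an odd sum of the endpoints of the inner arc.  The word Psi(d)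
   depends only on the sets of left and right endpoints of d.  Conversely a
   noncrossing diagram of sortable arcs is determined by these sets, because the
   arc ending at the smallest right endpoint is forced by parity, and maximality
   amounts to two local conditions: every pair k, k+2 contains an endpoint, and
   every pair k, k+1 of free points lies under an arc.  Reading endpoints off a
   word turns the Motzkin condition into the ballot condition "at most as many
   right endpoints up to k+1 as left endpoints up to k", the first local
   condition into a tautology and the second into the absence of peaks of
   height 1.  Finally, every ballot pair of endpoint sets is realised by
   matching right endpoints, from left to right, with their forced partners. *)

Lemma odd_mod2 x : odd x = (x %% 2 == 1).
Proof. by rewrite modn2; case: (odd x). Qed.

Lemma count_iotaSr (P : pred nat) k : count P (iota 0 k.+1) = count P (iota 0 k) + P k.
Proof. by rewrite -addn1 iotaD count_cat /= addn0. Qed.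

Lemma count_iota_mono (P : pred nat) a b : a <= b -> count P (iota 0 a) <= count P (iota 0 b).
Proof. by move=> le_ab; rewrite -(subnKC le_ab) iotaD count_cat leq_addr. Qed.

Lemma count_iota_stable (P : pred nat) a b : (forall x, P x -> x < a) -> a <= b ->
  count P (iota 0 b) = count P (iota 0 a).
Proof.
move=> bndP le_ab; rewrite -(subnKC le_ab) iotaD count_cat add0n -[RHS]addn0; congr (_ + _).
apply/eqP; rewrite eqn0Ngt -has_count; apply/hasP => -[x]; rewrite mem_iota => /andP[le_ax _].
by move=> /bndP; rewrite ltnNge le_ax.
Qed.

Lemma count_iota_predD1 (P : pred nat) x k : P x ->
  count P (iota 0 k) = count (fun y => P y && (y != x)) (iota 0 k) + (x < k).
Proof.
move=> Px; elim: k => [|k IH] //; rewrite !count_iotaSr IH.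
by case: (eqVneq k x) => [->|ne_kx]; rewrite ?Px ?andbT /=; lia.
Qed.

Lemma count_iota_image (T : finType) (A : {set T}) (f : T -> nat) k :
  {in A &, injective f} ->
  count (fun x => [exists a in A, f a == x]) (iota 0 k) = #|[set a in A | f a < k]|.
Proof.
move=> injf; rewrite -size_filter cardE -(size_map f); apply/perm_size/uniq_perm.
- exact/filter_uniq/iota_uniq.
- rewrite map_inj_in_uniq ?enum_uniq // => a b.
  by rewrite !mem_enum !inE => /andP[Aa _] /andP[Ab _]; apply: injf.
move=> x; rewrite mem_filter mem_iota /=; apply/andP/mapP => [[/exists_inP[a Aa /eqP fa] ltxk]|].
  by exists a; rewrite // mem_enum inE Aa fa.
by case=> a; rewrite mem_enum inE => /andP[Aa ltak] ->; split=> //; apply/exists_inP; exists a.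
Qed.

Definition ballot (L R : pred nat) : Prop :=
  forall k, count R (iota 0 k.+1) <= count L (iota 0 k).

Lemma ballot_predD1 (L R : pred nat) l r : ballot L R -> L l -> R r -> l < r ->
  (forall r', R r' -> r <= r') ->
  ballot (fun x => L x && (x != l)) (fun x => R x && (x != r)).
Proof.
move=> blt Ll Rr ltlr minr k; have := blt k.
rewrite (count_iota_predD1 _ Ll) (count_iota_predD1 _ Rr).
have [lerk | ltkr] := leqP r k; first lia.
rewrite (_ : count (fun x => R x && (x != r)) (iota 0 k.+1) = 0) //.
apply/eqP; rewrite -leqn0 leqNgt -has_count.
by apply/hasP => -[x]; rewrite mem_iota => /andP[_ ltx] /andP[/minr]; lia.
Qed.

(* Sortable arcs agree at their common interior points, so one is forced above
   the other only at an endpoint of one of them. *)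
Definition sarc_over (l1 r1 l2 r2 : nat) : bool :=
  [|| (l1 < l2 < r1) && odd l2, (l1 < r2 < r1) && odd r2,
      (l2 < l1 < r2) && ~~ odd l1 | (l2 < r1 < r2) && ~~ odd r1].

Definition sarc_cross (l1 r1 l2 r2 : nat) : bool :=
  [|| [&& l1 < l2, l2 < r1, r1 < r2 & ~~ odd (l2 + r1)],
      [&& l2 < l1, l1 < r2, r2 < r1 & ~~ odd (l1 + r2)],
      [&& l2 < l1, r1 < r2 & odd (l1 + r1)]
    | [&& l1 < l2, r2 < r1 & odd (l2 + r2)]].

Lemma sarc_overE l1 r1 l2 r2 : l1 < r1 -> l2 < r2 ->
  sarc_over l1 r1 l2 r2 && sarc_over l2 r2 l1 r1 = sarc_cross l1 r1 l2 r2.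
Proof. by rewrite /sarc_over /sarc_cross !odd_mod2; lia. Qed.

Lemma sarc_crossC l1 r1 l2 r2 : sarc_cross l1 r1 l2 r2 = sarc_cross l2 r2 l1 r1.
Proof. by rewrite /sarc_cross !odd_mod2; lia. Qed.

Lemma sarc_cross_irrefl l r : ~~ sarc_cross l r l r.
Proof. by rewrite /sarc_cross; lia. Qed.

Lemma sarc_nocross_later l r l' r' : l < r -> l' < r' -> r < r' -> l' != l ->
  ~~ sarc_cross l r l' r' =
  (l' < r) ==> ((l' < l) ==> ~~ odd (l + r)) && ((l < l') ==> odd (l' + r)).
Proof. by rewrite /sarc_cross !odd_mod2; lia. Qed.

(* The arc ending at the first right endpoint [r] must start at a partner of [r]:
   any other [l' < r] in [L] starts an arc ending beyond [r], which it may not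
   cross (see [sarc_nocross_later]). *)
Definition partner (L : pred nat) (r l : nat) : Prop :=
  [/\ L l, l < r & forall l', L l' -> l' < r ->
        ((l' < l) ==> ~~ odd (l + r)) && ((l < l') ==> odd (l' + r))].

Lemma eq_partner (L1 L2 : pred nat) r l : L1 =1 L2 -> partner L1 r l -> partner L2 r l.
Proof. by move=> eqL [L1l ltlr P1]; split=> [|//|l']; rewrite -!eqL //; apply: P1. Qed.

Lemma partner_uniq (L : pred nat) r l1 l2 : partner L r l1 -> partner L r l2 -> l1 = l2.
Proof.
move=> [L1 lt1 P1] [L2 lt2 P2].
have := P1 _ L2 lt2; have := P2 _ L1 lt1.
by case: (ltngtP l1 l2) => // _ /=; rewrite andbT; case: odd.
Qed.

Lemma partner_exists (L : pred nat) r : (exists2 l, L l & l < r) -> exists l, partner L r l.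
Proof.
move=> [l0 Ll0 lt0r].
have [/hasP[l1 + /andP[Ll1 ev1]]|noeven] :=
  boolP (has (fun l => L l && ~~ odd (l + r)) (iota 0 r)).
  rewrite mem_iota => /= lt1r.
  have ex : exists l, [&& L l, l < r & ~~ odd (l + r)] by exists l1; apply/and3P.
  have ub l : [&& L l, l < r & ~~ odd (l + r)] -> l <= r by case/and3P=> _ /ltnW.
  have [ls /and3P[Lls ltls evls] maxls] := ex_maxnP ex ub.
  exists ls; split=> // l Ll ltl; rewrite evls implybT /=; apply/implyP => gtl.
  by apply/negP => /negPn evl; have := maxls l; rewrite Ll ltl evl => /(_ isT); lia.
have ex : exists l, L l && (l < r) by exists l0; apply/andP.
have [ls /andP[Lls ltls] minls] := ex_minnP ex.
exists ls; split=> // l Ll ltl; apply/andP; split; apply/implyP => cmp.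
  by have := minls l; rewrite Ll ltl => /(_ isT); lia.
apply/negPn/negP => evl; case/hasP: noeven; exists l; first by rewrite mem_iota.
by rewrite Ll.
Qed.

Section Arcs.
Variable n : nat.
Implicit Types (a b : arcT n) (d : {set arcT n}).

Lemma sortable_above a k : sortable a -> above a k = interior a k && odd k.
Proof.
case/andP=> /and3P[_ _ /forallP above_int] /forallP parity.
have [abv|nabv] := boolP (above a k).
  by have /implyP/(_ abv) int := above_int k; have /implyP/(_ int)/eqP <- := parity k; rewrite int.
by case int: (interior a k) => //=; have /implyP/(_ int)/eqP <- := parity k; apply/esym/negbTE.
Qed.

Lemma sortable_ends a : sortable a -> [/\ 0 < aleft a, aleft a < aright a & aright a <= n.+1].
Proof. by case/andP=> /and3P[l_gt0 ltlr _] _; split=> //; rewrite /aright -ltnS ltn_ord. Qed.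

Lemma eq_sortable_arc a b : sortable a -> sortable b ->
  aleft a = aleft b -> aright a = aright b -> a = b.
Proof.
case: a => [[la ra] sa]; case: b => [[lb rb] sb] srta srtb eql eqr.
have el : la = lb by apply: val_inj.
have er : ra = rb by apply: val_inj.
subst lb rb; congr (_, _, _); apply/setP => k.
by have := sortable_above k srta; have := sortable_above k srtb; rewrite /above /interior /= => -> ->.
Qed.

Definition sarc (l r : nat) : arcT n := (inord l, inord r, [set k : 'I_n.+2 | (l < k < r) && odd k]).

Lemma sarc_left l r : l < n.+2 -> aleft (sarc l r) = l.
Proof. exact: inordK. Qed.

Lemma sarc_right l r : r < n.+2 -> aright (sarc l r) = r.
Proof. exact: inordK. Qed.

Lemma sarc_sortable l r : 0 < l -> l < r -> r <= n.+1 -> sortable (sarc l r).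
Proof.
move=> l_gt0 ltlr le_rn.
rewrite /sortable /valid_arc /interior /above sarc_left ?sarc_right; try lia.
apply/andP; split; [apply/and3P; split=> //; apply/forallP => k | apply/forallP => k].
  by rewrite inE; apply/implyP => /andP[].
by rewrite inE; apply/implyP => ->.
Qed.

Lemma exists_over_at a b : sortable a -> sortable b ->
  [exists k, over_at a b k] = sarc_over (aleft a) (aright a) (aleft b) (aright b).
Proof.
move=> srta srtb; apply/existsP/idP => [[k]|].
  by rewrite /over_at !sortable_above // /sarc_over /interior /isend !odd_mod2; lia.
rewrite /sarc_over => /or4P[] over;
  [exists b.1.1 | exists b.1.2 | exists a.1.1 | exists a.1.2]; move: over;
  by rewrite /over_at !sortable_above // /interior /isend /aleft /aright !odd_mod2; lia.
Qed.

Lemma crossingE a b : sortable a -> sortable b ->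
  crossing a b = sarc_cross (aleft a) (aright a) (aleft b) (aright b).
Proof.
move=> srta srtb; have [_ lta _] := sortable_ends srta; have [_ ltb _] := sortable_ends srtb.
by rewrite /crossing !exists_over_at // sarc_overE.
Qed.

Definition lends d : pred nat := fun k => [exists a in d, aleft a == k].
Definition rends d : pred nat := fun k => [exists a in d, aright a == k].

Lemma lendsP d k : reflect (exists2 a, a \in d & aleft a = k) (lends d k).
Proof. by apply: (iffP exists_inP) => -[a da /eqP]; exists a. Qed.

Lemma rendsP d k : reflect (exists2 a, a \in d & aright a = k) (rends d k).
Proof. by apply: (iffP exists_inP) => -[a da /eqP]; exists a. Qed.

Lemma lends_setU1 a d k : lends (a |: d) k = (aleft a == k) || lends d k.
Proof.
apply/lendsP/orP => [[b]|[/eqP <-|/lendsP[b db <-]]].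
- by rewrite in_setU1 => /orP[/eqP-> | db] <-; [left | right; apply/lendsP; exists b].
- by exists a; rewrite ?setU11.
- by exists b; rewrite // in_setU1 db orbT.
Qed.

Lemma rends_setU1 a d k : rends (a |: d) k = (aright a == k) || rends d k.
Proof.
apply/rendsP/orP => [[b]|[/eqP <-|/rendsP[b db <-]]].
- by rewrite in_setU1 => /orP[/eqP-> | db] <-; [left | right; apply/rendsP; exists b].
- by exists a; rewrite ?setU11.
- by exists b; rewrite // in_setU1 db orbT.
Qed.

Lemma sortable_ncP d :
  reflect [/\ {in d, forall a, sortable a}, {in d &, injective (@aleft n)},
              {in d &, injective (@aright n)} &
              {in d &, forall a b, ~~ sarc_cross (aleft a) (aright a) (aleft b) (aright b)}]
          (sortable_nc d).
Proof.
apply: (iffP andP) => [[/andP[_ /forall_inP pairs] /forall_inP srt] | [srt linj rinj ncr]].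
  have pairP a b : a \in d -> b \in d -> a != b ->
      [&& aleft a != aleft b, aright a != aright b & ~~ crossing a b].
    by move=> da db; have /forall_inP/(_ b db)/implyP := pairs a da.
  split=> // [a b da db | a b da db | a b da db].
  - by apply: contra_eq => /(pairP a b da db)/and3P[].
  - by apply: contra_eq => /(pairP a b da db)/and3P[].
  - have [-> | neab] := eqVneq a b; first exact: sarc_cross_irrefl.
    by have /and3P[_ _] := pairP a b da db neab; rewrite crossingE ?srt.
split; last exact/forall_inP.
apply/andP; split; first by apply/forall_inP => a /srt/andP[].
apply/forall_inP => a da; apply/forall_inP => b db; apply/implyP => neab.
rewrite crossingE ?srt ?ncr ?andbT //; apply/andP; split.
  by apply: contra neab => /eqP/(linj a b da db)->.
by apply: contra neab => /eqP/(rinj a b da db)->.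
Qed.

Section SortableDiagram.
Variable d : {set arcT n}.
Hypothesis sncd : sortable_nc d.

Lemma sortable_nc_sortable a : a \in d -> sortable a.
Proof. by case/sortable_ncP: sncd => srt _ _ _; apply: srt. Qed.

Lemma sortable_nc_left_inj : {in d &, injective (@aleft n)}.
Proof. by case/sortable_ncP: sncd. Qed.

Lemma sortable_nc_right_inj : {in d &, injective (@aright n)}.
Proof. by case/sortable_ncP: sncd. Qed.

Lemma sortable_nc_nocross a b : a \in d -> b \in d ->
  ~~ sarc_cross (aleft a) (aright a) (aleft b) (aright b).
Proof. by case/sortable_ncP: sncd => _ _ _; apply. Qed.

Lemma lends_range k : lends d k -> 0 < k <= n.
Proof.
by case/lendsP=> a /sortable_nc_sortable/sortable_ends[? ? ?] <-; apply/andP; split=> //; lia.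
Qed.

Lemma rends_range k : rends d k -> 1 < k <= n.+1.
Proof.
by case/rendsP=> a /sortable_nc_sortable/sortable_ends[? ? ?] <-; apply/andP; split=> //; lia.
Qed.

Lemma count_lends k : count (lends d) (iota 0 k) = #|[set a in d | aleft a < k]|.
Proof. exact/count_iota_image/sortable_nc_left_inj. Qed.

Lemma count_rends k : count (rends d) (iota 0 k) = #|[set a in d | aright a < k]|.
Proof. exact/count_iota_image/sortable_nc_right_inj. Qed.

Lemma count_ends_all : count (rends d) (iota 0 n.+2) = count (lends d) (iota 0 n.+2).
Proof.
rewrite count_lends count_rends; apply: eq_card => a.
by rewrite !inE !ltn_ord !andbT.
Qed.

Lemma rends_lends_subset k : [set a in d | aright a < k.+1] \subset [set a in d | aleft a < k].
Proof.
apply/subsetP => a; rewrite !inE => /andP[da ltr]; rewrite da.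
by have [_ ltlr _] := sortable_ends (sortable_nc_sortable da); lia.
Qed.

Lemma ballot_ends : ballot (lends d) (rends d).
Proof. by move=> k; rewrite count_lends count_rends subset_leq_card ?rends_lends_subset. Qed.

Lemma count_rends_ltE k :
  (count (rends d) (iota 0 k.+1) < count (lends d) (iota 0 k)) =
  [exists a in d, aleft a < k < aright a].
Proof.
rewrite count_lends count_rends (ltn_leqif (subset_leqif_card (rends_lends_subset k))).
apply/subsetPn/exists_inP => [[a] | [a da /andP[ltl ltr]]].
  by rewrite !inE => /andP[da ltl] /nandP[/negP // | ]; exists a => //; lia.
by exists a; rewrite !inE da //=; lia.
Qed.

End SortableDiagram.

Lemma sortable_nc_subset d d' : d' \subset d -> sortable_nc d -> sortable_nc d'.
Proof.
move=> /subsetP sub /sortable_ncP[srt linj rinj ncr]; apply/sortable_ncP.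
by split; [move=> a /sub/srt | exact: sub_in2 linj | exact: sub_in2 rinj | exact: sub_in2 ncr].
Qed.

Lemma sortable_nc_setU1 d a : sortable_nc d -> sortable a ->
  ~~ lends d (aleft a) -> ~~ rends d (aright a) ->
  {in d, forall b, ~~ sarc_cross (aleft a) (aright a) (aleft b) (aright b)} ->
  sortable_nc (a |: d).
Proof.
move=> /sortable_ncP[srt linj rinj ncr] srta freel freer ncra; apply/sortable_ncP; split.
- by move=> b; rewrite in_setU1 => /orP[/eqP-> | /srt].
- move=> b c; rewrite !in_setU1 => /orP[/eqP-> | db] /orP[/eqP-> | dc] // eql; last exact: linj.
  + by case/negP: freel; apply/lendsP; exists c.
  + by case/negP: freel; apply/lendsP; exists b.
- move=> b c; rewrite !in_setU1 => /orP[/eqP-> | db] /orP[/eqP-> | dc] // eqr; last exact: rinj.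
  + by case/negP: freer; apply/rendsP; exists c.
  + by case/negP: freer; apply/rendsP; exists b.
- move=> b c; rewrite !in_setU1 => /orP[/eqP-> | db] /orP[/eqP-> | dc].
  + exact: sarc_cross_irrefl.
  + exact: ncra.
  + by rewrite sarc_crossC ncra.
  + exact: ncr.
Qed.

Lemma lends_setD1 d a k : sortable_nc d -> a \in d ->
  lends (d :\ a) k = (k != aleft a) && lends d k.
Proof.
move=> sncd da; apply/lendsP/andP => [[b] | [nek /lendsP[b db eqk]]].
  rewrite in_setD1 => /andP[neba db] <-; split; last by apply/lendsP; exists b.
  by apply: contra neba => /eqP/(sortable_nc_left_inj sncd db da)->.
by exists b => //; rewrite in_setD1 db andbT; apply: contraNneq nek => eqba; rewrite -eqk eqba.
Qed.

Lemma rends_setD1 d a k : sortable_nc d -> a \in d ->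
  rends (d :\ a) k = (k != aright a) && rends d k.
Proof.
move=> sncd da; apply/rendsP/andP => [[b] | [nek /rendsP[b db eqk]]].
  rewrite in_setD1 => /andP[neba db] <-; split; last by apply/rendsP; exists b.
  by apply: contra neba => /eqP/(sortable_nc_right_inj sncd db da)->.
by exists b => //; rewrite in_setD1 db andbT; apply: contraNneq nek => eqba; rewrite -eqk eqba.
Qed.

Lemma min_right_partner d a : sortable_nc d -> a \in d ->
  (forall b, b \in d -> aright a <= aright b) -> partner (lends d) (aright a) (aleft a).
Proof.
move=> sncd da mina; have [_ lta _] := sortable_ends (sortable_nc_sortable sncd da).
split=> [|//|_ /lendsP[b db <-] ltbr]; first by apply/lendsP; exists a.
have [-> | neba] := eqVneq b a; first by rewrite ltnn.
have [_ ltb _] := sortable_ends (sortable_nc_sortable sncd db).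
have ltr : aright a < aright b.
  rewrite ltn_neqAle mina // andbT; apply: contra neba => /eqP eqr.
  by apply/eqP/(sortable_nc_right_inj sncd).
have nel : aleft b != aleft a.
  by apply: contra neba => /eqP/(sortable_nc_left_inj sncd db da)->.
by have := sortable_nc_nocross sncd da db; rewrite sarc_nocross_later // ltbr.
Qed.

Lemma sortable_nc_ends_inj d1 d2 : sortable_nc d1 -> sortable_nc d2 ->
  lends d1 =1 lends d2 -> rends d1 =1 rends d2 -> d1 = d2.
Proof.
move: {2}#|d1| (erefl #|d1|) => m.
elim: m d1 d2 => [|m IH] d1 d2 card1 sncd1 sncd2 eqL eqR.
  have d1_0 : d1 = set0 by apply/cards0_eq.
  apply/esym/setP => b; rewrite d1_0 inE; apply/negP => db.
  have /rendsP[c] : rends d1 (aright b) by rewrite eqR; apply/rendsP; exists b.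
  by rewrite d1_0 inE.
have [a0 da0] : exists a0, a0 \in d1 by apply/set0Pn; rewrite -card_gt0 card1.
have [a da mina] : exists2 a, a \in d1 & forall b, b \in d1 -> aright a <= aright b.
  by case: (arg_minnP (fun a => aright a) da0) => a; exists a.
have [b db eqr] : exists2 b, b \in d2 & aright b = aright a.
  by apply/rendsP; rewrite -eqR; apply/rendsP; exists a.
have minb c : c \in d2 -> aright b <= aright c.
  move=> dc; have /rendsP[c' dc' <-] : rends d1 (aright c) by rewrite eqR; apply/rendsP; exists c.
  by rewrite eqr mina.
have eqab : a = b.
  apply: eq_sortable_arc (sortable_nc_sortable sncd1 da) (sortable_nc_sortable sncd2 db) _ (esym eqr).
  apply: (@partner_uniq (lends d1) (aright a)); first exact: min_right_partner.
  by rewrite -eqr; apply: eq_partner (min_right_partner sncd2 db minb) => k; rewrite eqL.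
subst b; rewrite -(setD1K da) -(setD1K db); congr (_ |: _).
apply: IH => [|||k|k].
- by move: card1; rewrite (cardsD1 a) da; lia.
- exact: sortable_nc_subset (subD1set d1 a) sncd1.
- exact: sortable_nc_subset (subD1set d2 a) sncd2.
- by rewrite !lends_setD1 // eqL.
- by rewrite !rends_setD1 // eqR.
Qed.

Lemma exists_sortable_nc (L R : pred nat) :
  (forall x, L x -> 0 < x < n.+2) -> (forall x, R x -> x < n.+2) ->
  ballot L R -> count R (iota 0 n.+2) = count L (iota 0 n.+2) ->
  exists d : {set arcT n}, [/\ sortable_nc d, lends d =1 L & rends d =1 R].
Proof.
have count_gt0 (P : pred nat) x k : P x -> x < k -> 0 < count P (iota 0 k).
  by move=> Px ltx; rewrite -has_count; apply/hasP; exists x; rewrite ?mem_iota.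
move: {2}(count R _) (erefl (count R (iota 0 n.+2))) => m.
elim: m L R => [|m IH] L R cntR rngL rngR blt bal.
  exists set0; split.
  - by apply/sortable_ncP; split=> ?; rewrite inE.
  - move=> x; apply/lendsP/idP => [[a] | Lx]; first by rewrite inE.
    by have /andP[_ /(count_gt0 _ _ _ Lx)] := rngL x Lx; rewrite -bal cntR.
  - move=> x; apply/rendsP/idP => [[a] | Rx]; first by rewrite inE.
    by have := count_gt0 _ _ _ Rx (rngR x Rx); rewrite cntR.
have [r0 Rr0 minr0] : exists2 r0, R r0 & forall r, R r -> r0 <= r.
  have : 0 < count R (iota 0 n.+2) by rewrite cntR.
  rewrite -has_count => /hasP[r _ Rr].
  by have [r0 Rr0 min] := ex_minnP (ex_intro R r Rr); exists r0.
have [ls [Lls ltls partls]] : exists ls, partner L r0 ls.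
  apply: partner_exists; have := leq_trans (count_gt0 _ _ _ Rr0 (ltnSn r0)) (blt r0).
  by rewrite -has_count => /hasP[l]; rewrite mem_iota => /andP[_ ltl] Ll; exists l.
pose L' x := L x && (x != ls); pose R' x := R x && (x != r0).
have cntL k : count L (iota 0 k) = count L' (iota 0 k) + (ls < k) := count_iota_predD1 _ Lls.
have cntR' k : count R (iota 0 k) = count R' (iota 0 k) + (r0 < k) := count_iota_predD1 _ Rr0.
have ltr0 := rngR r0 Rr0; have /andP[ls_gt0 _] := rngL ls Lls.
have [d' [sncd' eqL' eqR']] : exists d', [/\ sortable_nc d', lends d' =1 L' & rends d' =1 R'].
  apply: IH => [|x /andP[/rngL] // | x /andP[/rngR] // | |].
  - by move: cntR; rewrite cntR' ltr0; lia.
  - exact: ballot_predD1.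
  - by move: bal; rewrite cntL cntR' ltr0 (ltn_trans ltls ltr0); lia.
have eql : aleft (sarc ls r0) = ls by rewrite sarc_left //; lia.
have eqr : aright (sarc ls r0) = r0 by rewrite sarc_right.
exists (sarc ls r0 |: d'); split.
- apply: sortable_nc_setU1; rewrite ?sarc_sortable ?eql ?eqr ?eqL' ?eqR' /L' /R' ?eqxx ?andbF //.
  move=> b db; have [_ ltb _] := sortable_ends (sortable_nc_sortable sncd' db).
  have /andP[Lb nelb] : L' (aleft b) by rewrite -eqL'; apply/lendsP; exists b.
  have /andP[/minr0 lerb nerb] : R' (aright b) by rewrite -eqR'; apply/rendsP; exists b.
  rewrite sarc_nocross_later //; last by rewrite ltn_neqAle eq_sym nerb.
  by apply/implyP; apply: partls.
- move=> x; rewrite lends_setU1 eqL' eql /L'.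
  by case: eqVneq => [<- | nex] /=; rewrite ?Lls // andbT.
- move=> x; rewrite rends_setU1 eqR' eqr /R'.
  by case: eqVneq => [<- | nex] /=; rewrite ?Rr0 // andbT.
Qed.

Lemma MAD_cross d l r : is_MAD d -> 0 < l -> l < r -> r <= n.+1 ->
  ~~ lends d l -> ~~ rends d r -> exists2 b, b \in d & sarc_cross l r (aleft b) (aright b).
Proof.
move=> [sncd maxd] l_gt0 ltlr le_rn freel freer.
apply/exists_inP; apply: contraNT (freel) => nocross.
have eql : aleft (sarc l r) = l by rewrite sarc_left //; lia.
have eqr : aright (sarc l r) = r by rewrite sarc_right.
have sncd' : sortable_nc (sarc l r |: d).
  apply: sortable_nc_setU1; rewrite ?sarc_sortable ?eql ?eqr // => b db.
  by apply: contra nocross => cross; apply/exists_inP; exists b.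
apply/lendsP; exists (sarc l r) => //.
by rewrite -(maxd _ sncd' (subsetUr _ _)) setU11.
Qed.

Lemma arc_neq_free_ends d b k k' : sortable_nc d -> b \in d ->
  ~~ lends d k -> ~~ rends d k' -> [/\ aleft b != k, aright b != k' & aleft b < aright b].
Proof.
move=> sncd db freel freer; have [_ ltb _] := sortable_ends (sortable_nc_sortable sncd db).
split=> //; [apply: contraNneq freel | apply: contraNneq freer] => <-.
  by apply/lendsP; exists b.
by apply/rendsP; exists b.
Qed.

Lemma is_MADP d : is_MAD d <->
  [/\ sortable_nc d,
      forall k, 0 < k -> k.+2 <= n.+1 -> lends d k || rends d k.+2 &
      forall k, 0 < k <= n -> ~~ lends d k -> ~~ rends d k.+1 ->
        [exists b in d, aleft b < k < aright b]].
Proof.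
split=> [M | [sncd len2 len1]].
  split=> [|k k_gt0 lek | k /andP[k_gt0 lek] freel freer]; first exact: M.1.
    apply/negPn/negP; rewrite negb_or => /andP[freel freer].
    have [b db] := MAD_cross M k_gt0 (ltnW (ltnSn k.+1)) lek freel freer.
    have [nel ner ltb] := arc_neq_free_ends M.1 db freel freer.
    by rewrite /sarc_cross !odd_mod2; lia.
  have [b db cross] := MAD_cross M k_gt0 (ltnSn k) lek freel freer.
  have [nel ner ltb] := arc_neq_free_ends M.1 db freel freer.
  by apply/exists_inP; exists b => //; move: cross; rewrite /sarc_cross !odd_mod2; lia.
split=> // d' sncd' sub; apply/eqP; rewrite eqEsubset sub andbT; apply/subsetP => a d'a.
have [l_gt0 ltlr le_rn] := sortable_ends (sortable_nc_sortable sncd' d'a).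
have [/lendsP[b db eql] | freel] := boolP (lends d (aleft a)).
  by rewrite (sortable_nc_left_inj sncd' d'a (subsetP sub b db) (esym eql)).
have [/rendsP[b db eqr] | freer] := boolP (rends d (aright a)).
  by rewrite (sortable_nc_right_inj sncd' d'a (subsetP sub b db) (esym eqr)).
have nocross b : b \in d -> ~~ sarc_cross (aleft a) (aright a) (aleft b) (aright b).
  by move=> db; exact: (sortable_nc_nocross sncd' d'a (subsetP sub b db)).
have [lt2 | gt2 | eq2] := ltngtP (aright a) (aleft a).+2.
- have eqr : aright a = (aleft a).+1 by lia.
  have rng : 0 < aleft a <= n by apply/andP; split; lia.
  have freer' : ~~ rends d (aleft a).+1 by rewrite -eqr.
  have /exists_inP[b db span] := len1 _ rng freel freer'.
  have [nel ner ltb] := arc_neq_free_ends sncd db freel freer.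
  by move: (nocross b db) span; rewrite eqr /sarc_cross !odd_mod2; lia.
- have := len2 _ l_gt0 (ltnW (leq_trans gt2 le_rn)); rewrite (negbTE freel) => /rendsP[b db eqrb].
  have [nel ner ltb] := arc_neq_free_ends sncd db freel freer.
  by move: (nocross b db); rewrite eqrb /sarc_cross !odd_mod2; lia.
- by have := len2 _ l_gt0; rewrite -eq2 (negbTE freel) (negbTE freer) => /(_ le_rn).
Qed.

End Arcs.

(* Inverse of the dictionary Psi: [k] is a left endpoint iff M_(k+1) <> D and a
   right endpoint iff M_(k-1) <> U, where M_i is [nth H w i.-1]. *)
Definition word_lends (w : seq step) : pred nat :=
  fun k => (0 < k < size w) && ~~ isD (nth H w k).
Definition word_rends (w : seq step) : pred nat :=
  fun k => (1 < k <= size w) && ~~ isU (nth H w k.-2).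

Lemma isU_isD_le1 s : isU s + isD s <= 1.
Proof. by case: s. Qed.

Section Words.
Variable w : seq step.
Local Notation L := (word_lends w).
Local Notation R := (word_rends w).

Lemma count_word_rends j : j < size w -> count R (iota 0 j.+2) + count isU (take j w) = j.
Proof.
elim: j => [|j IH] ltj; first by rewrite take0.
rewrite count_iotaSr (take_nth H (ltnW ltj)) -cats1 count_cat /= addn0.
have -> : R j.+2 = ~~ isU (nth H w j) by rewrite /word_rends ltj.
by have := IH (ltnW ltj); case: isU => /=; lia.
Qed.

Lemma count_word_lends j : ~~ isD (nth H w 0) -> j < size w ->
  count L (iota 0 j.+1) + count isD (take j.+1 w) = j.
Proof.
move=> D0; elim: j => [|j IH] ltj; first by rewrite (take_nth H ltj) take0 /= (negbTE D0).
rewrite count_iotaSr (take_nth H ltj) -cats1 count_cat /= addn0.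
have -> : L j.+1 = ~~ isD (nth H w j.+1) by rewrite /word_lends ltj.
by have := IH (ltnW ltj); case: isD => /=; lia.
Qed.

Lemma motzkin_ballotP : 0 < size w -> motzkin (size w) w <->
  [/\ ~~ isD (nth H w 0), ~~ isU (nth H w (size w).-1), ballot L R &
      count R (iota 0 (size w).+1) = count L (iota 0 (size w).+1)].
Proof.
case sz: (size w) => [//|n] _.
have take_all : take n.+1 w = w by rewrite -sz take_size.
have count_w (P : pred step) : count P w = count P (take n w) + P (nth H w n).
  by rewrite -{1}take_all (take_nth H) ?sz // -cats1 count_cat /= addn0.
have FR j : j <= n -> count R (iota 0 j.+2) + count isU (take j w) = j.
  by move=> lej; apply: count_word_rends; rewrite sz.
have Ln : count L (iota 0 n.+2) = count L (iota 0 n.+1).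
  by rewrite count_iotaSr /word_lends sz ltnn andbF addn0.
split=> [[_ tot pre] | [D0 Un blt bal]].
  have D0 : ~~ isD (nth H w 0).
    by have := pre 1; rewrite (take_nth H) ?sz // take0 /=; case: (nth H w 0).
  have FL j : j <= n -> count L (iota 0 j.+1) + count isD (take j.+1 w) = j.
    by move=> lej; apply: count_word_lends; rewrite ?sz.
  have Un : ~~ isU (nth H w n).
    by have := pre n; move: tot; rewrite !count_w; case: (nth H w n) => //=; lia.
  have bal : count R (iota 0 n.+2) = count L (iota 0 n.+2).
    have := FR n (leqnn n); have := FL n (leqnn n); move: tot.
    by rewrite take_all (count_w isU) Ln (negbTE Un); lia.
  split=> // -[|k]; first by rewrite /word_rends.
  have [lek | ltnk] := leqP k n.
    have := FR k lek; have := FL k lek; have := pre k; have := pre k.+1.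
    rewrite (take_nth H) ?sz // -cats1 !count_cat /= !addn0.
    by have := isU_isD_le1 (nth H w k); lia.
  rewrite (count_iota_stable (a := n.+2)) ?bal; first exact: count_iota_mono.
    by move=> x /andP[/andP[_]]; rewrite sz.
  exact: ltnW.
rewrite /= in Un.
have FL j : j <= n -> count L (iota 0 j.+1) + count isD (take j.+1 w) = j.
  by move=> lej; apply: count_word_lends; rewrite ?sz.
have tot : count isU w = count isD w.
  have := FR n (leqnn n); have := FL n (leqnn n); move: bal.
  by rewrite take_all (count_w isU) Ln (negbTE Un); lia.
split=> // -[|p]; first by rewrite take0.
have [lep | ltnp] := leqP p.+1 n; last by rewrite take_oversize ?sz ?tot.
have := FL p (ltnW lep); have := FR p.+1 lep; have := blt p.+2.
rewrite count_iotaSr [count L (iota 0 p.+2)]count_iotaSr.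
by case: (R p.+2); case: (L p.+1) => /=; lia.
Qed.

Lemma peak_height1E p : ~~ isD (nth H w 0) -> p.+1 < size w -> isU (nth H w p) ->
  count R (iota 0 p.+2) <= count L (iota 0 p.+1) ->
  (peak_height w p == 1) = (count R (iota 0 p.+2) == count L (iota 0 p.+1)).
Proof.
move=> D0 ltp Up le_RL; rewrite /peak_height.
have := count_word_rends ltp; have := count_word_lends D0 (ltnW ltp).
rewrite [count R (iota 0 p.+3)]count_iotaSr (_ : R p.+2 = false) ?addn0; last first.
  by rewrite /word_rends Up andbF.
by move=> FL FR; apply/eqP/eqP; lia.
Qed.

End Words.

Section PsiBijection.
Variable n : nat.
Implicit Types (d : {set arcT n}) (w : seq step).

Lemma size_Psi d : size (Psi d) = n.+1.
Proof. by rewrite size_map size_iota. Qed.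

Lemma nth_Psi d i : i < n.+1 -> nth H (Psi d) i = Psi_letter d i.+1.
Proof. by move=> lti; rewrite (nth_map 0) ?size_iota // nth_iota // add1n. Qed.

Lemma Psi_letterE d i : Psi_letter d i =
  if (i <= n) && ~~ rends d i.+1 then U else if (1 < i) && ~~ lends d i.-1 then D else H.
Proof. by []. Qed.

Lemma Psi_word_ends d w : size w = n.+1 -> ~~ isD (nth H w 0) -> ~~ isU (nth H w n) ->
  lends d =1 word_lends w -> rends d =1 word_rends w -> Psi d = w.
Proof.
move=> sz D0 Un eqL eqR; apply: (@eq_from_nth _ H); rewrite size_Psi ?sz // => i lti.
rewrite nth_Psi // Psi_letterE eqL eqR /word_lends /word_rends sz /=.
case E: (nth H w i) => /=; rewrite !ltnS ?andbT ?andbF ?andbN ?lti /=.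
- have ltin : i < n by rewrite ltn_neqAle -ltnS lti andbT; apply: contraNneq Un => <-; rewrite E.
  by rewrite ltin.
- have i_gt0 : 0 < i by rewrite lt0n; apply: contraNneq D0 => i0; rewrite -i0 E.
  by rewrite i_gt0.
- by rewrite (lti : i <= n) andbT andbN.
Qed.

Lemma word_ends_Psi d : is_MAD d -> lends d =1 word_lends (Psi d) /\ rends d =1 word_rends (Psi d).
Proof.
move=> /is_MADP[sncd len2 _]; split=> k; rewrite /word_lends /word_rends size_Psi.
  have [/andP[k_gt0 ltk] | out] := boolP (0 < k < n.+1); last first.
    by apply: contraNF out => /(lends_range sncd).
  rewrite nth_Psi // Psi_letterE /=.
  case Lk: (lends d k); first by rewrite andbF; case: ifP.
  have [lek | gtk] := leqP k.+2 n.+1.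
    by have := len2 k k_gt0 lek; rewrite Lk /= => ->; rewrite andbF andbT ltnS k_gt0.
  by rewrite ltnNge (gtk : n <= k) /= andbT ltnS k_gt0.
have [/andP[k_gt1 lek] | out] := boolP (1 < k <= n.+1); last first.
  by apply: contraNF out => /(rends_range sncd).
case: k k_gt1 lek => [|[|k]] // _ lek.
rewrite /= nth_Psi ?Psi_letterE ?(lek : k.+1 <= n); last exact: ltnW.
by case: (rends d k.+2) => //=; case: ifP.
Qed.

Lemma Psi_Mbar d : is_MAD d -> Mbar n.+1 (Psi d).
Proof.
move=> M; have /is_MADP[sncd _ len1] := M; have [eqL eqR] := word_ends_Psi M.
have D0 : ~~ isD (nth H (Psi d) 0) by rewrite nth_Psi // Psi_letterE; case: ifP.
have blt : ballot (word_lends (Psi d)) (word_rends (Psi d)).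
  by move=> k; rewrite -(eq_count eqL) -(eq_count eqR); apply: ballot_ends.
split.
  rewrite -{1}(size_Psi d); apply/motzkin_ballotP; rewrite size_Psi //.
  split=> //; first by rewrite (nth_Psi d (ltnSn n)) Psi_letterE ltnn /=; case: ifP.
  by rewrite -(eq_count eqL) -(eq_count eqR) count_ends_all.
move=> p; rewrite size_Psi => ltp Up Dp.
have freel : ~~ lends d p.+1 by rewrite eqL /word_lends Dp andbF.
have freer : ~~ rends d p.+2 by rewrite eqR /word_rends Up andbF.
have := len1 p.+1 ltp freel freer.
rewrite -(count_rends_ltE sncd) (eq_count eqL) (eq_count eqR) => lt_RL.
by apply/eqP; rewrite peak_height1E ?size_Psi ?(ltnW lt_RL) // ltn_eqF.
Qed.

Lemma Psi_inj d1 d2 : is_MAD d1 -> is_MAD d2 -> Psi d1 = Psi d2 -> d1 = d2.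
Proof.
move=> M1 M2 eqPsi; have [eqL1 eqR1] := word_ends_Psi M1; have [eqL2 eqR2] := word_ends_Psi M2.
by apply: sortable_nc_ends_inj M1.1 M2.1 _ _ => k; rewrite ?eqL1 ?eqL2 ?eqR1 ?eqR2 eqPsi.
Qed.

Lemma Psi_surj w : Mbar n.+1 w -> exists2 d : {set arcT n}, is_MAD d & Psi d = w.
Proof.
move=> [mot nopeak]; have sz : size w = n.+1 by case: mot.
have := @motzkin_ballotP w; rewrite sz => /(_ isT)/iffLR/(_ mot)[D0 Un blt bal].
have rngL x : word_lends w x -> 0 < x < n.+2.
  by case/andP=> /andP[x_gt0 ltx] _; rewrite x_gt0 /=; lia.
have rngR x : word_rends w x -> x < n.+2 by case/andP=> /andP[_ lex] _; lia.
have [d [sncd eqL eqR]] := exists_sortable_nc rngL rngR blt bal.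
exists d; last exact: Psi_word_ends.
apply/is_MADP; split=> // [k k_gt0 lek | [//|p] /andP[_ lep] freel freer].
  have ltk : k < n.+1 by lia.
  by rewrite eqL eqR /word_lends /word_rends sz k_gt0 ltk lek /=; case: (nth H w k).
have ltp : p.+1 < size w by rewrite sz ltnS.
have Dp : isD (nth H w p.+1) by move: freel; rewrite eqL /word_lends ltp /=; case: (nth H w _).
have Up : isU (nth H w p) by move: freer; rewrite eqR /word_rends ltp /=; case: (nth H w _).
rewrite -(count_rends_ltE sncd) (eq_count eqL) (eq_count eqR).
have /eqP := nopeak p ltp Up Dp; rewrite peak_height1E ?blt // => /negbTE neq.
by rewrite ltn_neqAle neq blt.
Qed.

End PsiBijection.

Theorem theorem8p10 (n : nat) : 1 <= n ->
  [/\ (forall d : {set arcT n}, is_MAD d -> Mbar n.+1 (Psi d)),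
      (forall d1 d2 : {set arcT n}, is_MAD d1 -> is_MAD d2 -> Psi d1 = Psi d2 -> d1 = d2)
    & (forall w : seq step, Mbar n.+1 w -> exists2 d : {set arcT n}, is_MAD d & Psi d = w)].
Proof.
(* The bijection holds for every n. *)
move=> _; split.
- exact: Psi_Mbar.
- exact: Psi_inj.
- exact: Psi_surj.
Qed.
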